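(* Let $P=\langle(\mathcal Q,\le),N\rangle$ be a possibilistic logic program. The collection Poss-ASP returned by the procedure $Poss\_Answer\_Sets(P)$ is the set of all possibilistic answer sets of $P$.
   Context: $(\mathcal Q,\le)$ is a finite lattice with top $\top_{\mathcal Q}$. A possibilistic (disjunctive) logic program is $P=\langle(\mathcal Q,\le),N\rangle$ with $N$ a finite set of clauses $r=\alpha:\mathcal A\leftarrow\mathcal B^+,not\ \mathcal B^-$ and constraints $\top_{\mathcal Q}:\ \leftarrow\mathcal B^+,not\ \mathcal B^-$; strongly negated atoms are fresh atoms; $n(r)=\alpha$, $P^*$ the set of underlying clauses; answer sets of $P^*$ in the Gelfond–Lifschitz sense (complementary atoms allowed). Reduct $P_S=\{n(r):(\mathcal A\cap S)\leftarrow\mathcal B^+\mid r\in N,\mathcal A\cap S\ne\emptyset,\mathcal B^-\cap S=\emptyset,\mathcal B^+\subseteq S\}$. A positive clause $\alpha:a_1\vee\dots\vee a_m\leftarrow b_1,\dots,b_k$ is turned into the possibilistic disjunction $(a_1\vee\dots\vee a_m\vee\sim b_1\vee\dots\vee\sim b_k\ \ \alpha)$. Rule (R): from $(c_1\ \alpha_1),(c_2\ \alpha_2)$ infer $(R(c_1,c_2)\ \mathrm{GLB}\{\alpha_1,\alpha_2\})$ with $R(c_1,c_2)$ a classical resolvent. Procedure $Poss\_Answer\_Sets(P)$: for each answer set $S$ of $P^*$, let $\mathcal C$ be the set of possibilistic disjunctions obtained from $P_S$; for each $a\in S$, search for a derivation by repeated application of (R) from $\mathcal C\cup\{(\sim a\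 \top_{\mathcal Q})\}$ of the empty clause with maximal value $\alpha$, and put $(a,\alpha)$ into $S'$; add $S'$ to Poss-ASP; return Poss-ASP. Possibilistic answer sets: let $\mathcal{PS}$ be the sets of pairs (atom, element of $\mathcal Q$) with each atom at most once, $M^*$ the atoms of $M$, $A\sqsubseteq B$ iff $A^*\subseteq B^*$ and $\gamma\le\delta$ whenever $(x,\gamma)\in A,(x,\delta)\in B$; $\vdash_{PL}$ is necessity-valued possibilistic-logic inference (clauses as weighted formulas, classical axioms weighted $\top_{\mathcal Q}$, rules $(\varphi\ \gamma),(\varphi\to\psi\ \delta)\vdash(\psi\ \mathrm{GLB}\{\gamma,\delta\})$ and $(\varphi\ \gamma),(\varphi\ \delta)\vdash(\varphi\ \epsilon)$ for $\epsilon\le\mathrm{GLB}\{\gamma,\delta\}$); $P\Vvdash_{PL}M$ iff $M^*$ is an answer set of $P^*$ and $P_{M^*}\vdash_{PL}(a\ \gamma)$ for all $(a,\gamma)\in M$; $M$ is a possibilistic answer set iff $M^*$ is an answer set of $P^*$, $P\Vvdash_{PL}M$ and no $M''\ne M$ in $\mathcal{PS}$ satisfies $M\sqsubseteq M''$ and $P\Vvdash_{PL}M''$. *)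

From HB Require Import structures.
From mathcomp Require Import all_boot all_order.
From Stdlib Require List.

Set Implicit Arguments.
Unset Strict Implicit.
Unset Printing Implicit Defensive.

Import Order.LTheory.
Local Open Scope order_scope.

(* A clause  alpha : A <- B+, not B-   (a constraint has A = set0). *)
Record pclause (T : finType) (Q : Type) := PClause {
  phead : {set T};
  ppos  : {set T};
  pneg  : {set T};
  pweight : Q
}.

Section PossProg.
Context {d : Order.disp_t} (Q : finTBLatticeType d) (T : finType).
Notation clause := (pclause T Q).

Definition wf_program (N : seq clause) : Prop :=
  forall r, List.In r N -> phead r = set0 -> pweight r = \top.

(* X is a model of the GL reduct of P* w.r.t. S *)
Definition gl_model (N : seq clause) (S X : {set T}) : Prop :=
  forall r, List.In r N -> pneg r :&: S = set0 -> ppos r \subset X ->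
    phead r :&: X != set0.

Definition answer_set (N : seq clause) (S : {set T}) : Prop :=
  gl_model N S S /\ forall X : {set T}, X \proper S -> ~ gl_model N S X.

Definition in_reduct (N : seq clause) (S : {set T}) (h p : {set T}) (a : Q)
  : Prop :=
  exists r, [/\ List.In r N, phead r :&: S != set0, pneg r :&: S = set0,
             ppos r \subset S &
             [/\ h = phead r :&: S, p = ppos r & a = pweight r]].

(* a classical clause: (positive literals, negated atoms) *)
Definition pdisj := ({set T} * {set T})%type.

Definition empty_clause : pdisj := (set0, set0).

Definition resolvent (c1 c2 c : pdisj) : Prop :=
  exists x,
    (x \in c1.1 /\ x \in c2.2 /\ c = ((c1.1 :\ x) :|: c2.1, c1.2 :|: (c2.2 :\ x)))
 \/ (x \in c2.1 /\ x \in c1.2 /\ c = ((c2.1 :\ x) :|: c1.1, c2.2 :|: (c1.2 :\ x))).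

Inductive res_deriv (C : pdisj -> Q -> Prop) : pdisj -> Q -> Prop :=
| rd_base c a : C c a -> res_deriv C c a
| rd_res c1 a1 c2 a2 c :
    res_deriv C c1 a1 -> res_deriv C c2 a2 -> resolvent c1 c2 c ->
    res_deriv C c (Order.meet a1 a2).

Definition reduct_disj (N : seq clause) (S : {set T}) (c : pdisj) (a : Q) : Prop :=
  exists h p, in_reduct N S h p a /\ c = (h, p).

Definition refut_base (N : seq clause) (S : {set T}) (x : T) (c : pdisj) (a : Q)
  : Prop :=
  reduct_disj N S c a \/ (c = (set0, [set x]) /\ a = \top).

Definition refutes (N : seq clause) (S : {set T}) (x : T) (a : Q) : Prop :=
  res_deriv (refut_base N S x) empty_clause a.

Definition pset := {ffun T -> option Q}.

Definition pstar (M : pset) : {set T} := [set x | M x != None].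

(* M is one possible output S' of Poss_Answer_Sets(P): for some answer set
   S of P*, every a in S is paired with a maximal value alpha of a
   refutation of C u {(~a \top)}, and no other atom occurs. *)
Definition procedure_output (N : seq clause) (M : pset) : Prop :=
  exists S, answer_set N S /\
    forall x,
      (x \notin S -> M x = None) /\
      (x \in S -> exists a, [/\ M x = Some a, refutes N S x a &
                   forall b, refutes N S x b -> a <= b -> b = a]).

Inductive form :=
| FVar of T | FTop | FBot | FNeg of form
| FAnd of form & form | FOr of form & form | FImp of form & form.

Fixpoint feval (v : T -> bool) (f : form) : bool :=
  match f with
  | FVar x => v x
  | FTop => true
  | FBot => false
  | FNeg g => ~~ feval v g
  | FAnd g h => feval v g && feval v h
  | FOr g h => feval v g || feval v h
  | FImp g h => feval v g ==> feval v h
  end.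

Definition tautology (f : form) : Prop := forall v, feval v f.

Definition big_and (s : seq T) : form := foldr (fun x f => FAnd (FVar x) f) FTop s.
Definition big_or (s : seq T) : form := foldr (fun x f => FOr (FVar x) f) FBot s.

Definition clause_formula (h p : {set T}) : form :=
  FImp (big_and (enum p)) (big_or (enum h)).

Inductive pl_deriv (B : form -> Q -> Prop) : form -> Q -> Prop :=
| pl_hyp f a : B f a -> pl_deriv B f a
| pl_ax f : tautology f -> pl_deriv B f \top
| pl_mp f g a b : pl_deriv B f a -> pl_deriv B (FImp f g) b ->
    pl_deriv B g (Order.meet a b)
| pl_weak f a b e : pl_deriv B f a -> pl_deriv B f b ->
    e <= Order.meet a b -> pl_deriv B f e.

Definition reduct_base (N : seq clause) (S : {set T}) (f : form) (a : Q) : Prop :=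
  exists h p, in_reduct N S h p a /\ f = clause_formula h p.

Definition pl_entails (N : seq clause) (M : pset) : Prop :=
  answer_set N (pstar M) /\
  forall x a, M x = Some a -> pl_deriv (reduct_base N (pstar M)) (FVar x) a.

Definition ps_le (M M'' : pset) : Prop :=
  pstar M \subset pstar M'' /\
  forall x g e, M x = Some g -> M'' x = Some e -> g <= e.

Definition poss_answer_set (N : seq clause) (M : pset) : Prop :=
  [/\ answer_set N (pstar M), pl_entails N M &
      ~ exists M'', [/\ M'' <> M, ps_le M M'' & pl_entails N M'']].

End PossProg.

(* Both sides of the equivalence are governed by one semantic notion: x is
   entailed by the alpha-cut of P_S, i.e. by the reduct clauses of weight at
   least alpha.  Necessity-valued inference derives (x alpha) exactly when x is
   so entailed (soundness by induction, completeness by chaining modus ponens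
   through a tautology), and resolution refutes C u {(~x T)} with value at
   least alpha exactly when x is so entailed (soundness, and refutational
   completeness of resolution via semantic trees).  Hence the procedure outputs
   precisely the sets pairing each atom of an answer set with a maximal
   entailment degree.  The same holds for possibilistic answer sets: answer
   sets of P* form an antichain, so a [=-larger candidate can only raise
   degrees, and maximality of M forces each degree to be maximal. *)
From HB Require Import structures.
From mathcomp Require Import all_boot all_order.
From Stdlib Require Import Classical.
From Stdlib Require List.

Set Implicit Arguments.
Unset Strict Implicit.
Unset Printing Implicit Defensive.

Import Order.LTheory.
Local Open Scope order_scope.

Section Valuations.
Variable T : finType.
Implicit Types (v : T -> bool) (c : pdisj T).

Definition sat v c : bool := [exists z in c.1, v z] || [exists z in c.2, ~~ v z].

Lemma satPn v c :
  reflect ((forall z, z \in c.1 -> ~~ v z) /\ (forall z, z \in c.2 -> v z))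
          (~~ sat v c).
Proof.
rewrite negb_or; apply: (iffP andP) => -[H1 H2].
  split=> z Hz; first exact: (exists_inPn H1).
  by rewrite -[v z]negbK (exists_inPn H2).
by split; apply/exists_inPn=> z /[dup] Hz; [move/H1 | move/H2 ->].
Qed.

Lemma feval_big_and v s : feval v (big_and s) = all v s.
Proof. by elim: s => //= x s ->. Qed.

Lemma feval_big_or v s : feval v (big_or s) = has v s.
Proof. by elim: s => //= x s ->. Qed.

Lemma feval_clause_formula v h p : feval v (clause_formula h p) = sat v (h, p).
Proof.
rewrite /= feval_big_and feval_big_or /sat /= implybE orbC -has_predC.
by congr (_ || _); apply/hasP/exists_inP=> -[z];
  rewrite ?mem_enum => ? ?; exists z; rewrite ?mem_enum.
Qed.

Definition resolve (y : T) c0 c1 : pdisj T :=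
  ((c0.1 :\ y) :|: c1.1, c0.2 :|: (c1.2 :\ y)).

Lemma resolventE c0 c1 c :
  resolvent c0 c1 c <-> exists y,
    (y \in c0.1 /\ y \in c1.2 /\ c = resolve y c0 c1)
 \/ (y \in c1.1 /\ y \in c0.2 /\ c = resolve y c1 c0).
Proof. by []. Qed.

Lemma unsat_resolve v y c0 c1 :
  ~~ sat v (resolve y c0 c1) -> ~~ sat v c0 \/ ~~ sat v c1.
Proof.
move=> /satPn[H1 H2]; case: (boolP (v y)) => vy; [right | left];
  apply/satPn; split=> z Hz.
- by apply: H1; rewrite !inE Hz orbT.
- by case: (eqVneq z y) => [-> // | nzy]; apply: H2; rewrite !inE nzy Hz orbT.
- by case: (eqVneq z y) => [-> // | nzy]; apply: H1; rewrite !inE nzy Hz.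
- by apply: H2; rewrite !inE Hz.
Qed.

Lemma sat_resolvent v c0 c1 c :
  resolvent c0 c1 c -> sat v c0 -> sat v c1 -> sat v c.
Proof.
move=> /resolventE[y [[_ [_ ->]] | [_ [_ ->]]]] s0 s1; apply: contraT;
  by case/unsat_resolve=> /negP.
Qed.

Definition upd v (y : T) (b : bool) (z : T) : bool := if z == y then b else v z.

Definition atoms c : {set T} := c.1 :|: c.2.

Lemma unsat_upd_notin v y b c :
  y \notin atoms c -> ~~ sat (upd v y b) c -> ~~ sat v c.
Proof.
rewrite !inE negb_or => /andP[n1 n2] /satPn[H1 H2]; apply/satPn.
have upd_ne z : z != y -> upd v y b z = v z by rewrite /upd => /negbTE ->.
split=> z Hz.
  by rewrite -upd_ne ?H1 //; apply: contraNneq n1 => <-.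
by rewrite -upd_ne ?H2 //; apply: contraNneq n2 => <-.
Qed.

(* The semantic-tree step: the clauses falsified by the two extensions of v
   at y resolve on y to a clause falsified by v. *)
Lemma unsat_resolve_upd v y c0 c1 :
  ~~ sat (upd v y false) c0 -> ~~ sat (upd v y true) c1 ->
  ~~ sat v (resolve y c0 c1).
Proof.
rewrite /upd => /satPn[F01 F02] /satPn[F11 F12]; apply/satPn; split=> z;
  rewrite !inE => /orP[|].
- by case/andP=> /negbTE nzy /F01; rewrite nzy.
- by move=> /F11; case: eqP.
- by move=> /F02; case: eqP.
- by case/andP=> /negbTE nzy /F12; rewrite nzy.
Qed.

End Valuations.

Section Resolution.
Context {d : Order.disp_t} (Q : finTBLatticeType d) (T : finType).
Variable C : pdisj T -> Q -> Prop.

Lemma res_deriv_sound (v : T -> bool) c w :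
  res_deriv C c w -> (forall c' w', C c' w' -> w <= w' -> sat v c') -> sat v c.
Proof.
elim=> {c w} [c w Cc | c1 w1 c2 w2 c _ IH1 _ IH2 Hres] Hv; first exact: Hv Cc _.
apply: (sat_resolvent Hres); [apply: IH1 | apply: IH2] => c' w' Cc' le_w';
  by apply: Hv Cc' (le_trans _ le_w'); rewrite ?leIl ?leIr.
Qed.

Variable a : Q.
Hypothesis C_unsat :
  forall v : T -> bool, exists c w, [/\ C c w, a <= w & ~~ sat v c].

Let derivable c := exists2 w, a <= w & res_deriv C c w.

Let refuted_within (U : {set T}) := forall v : T -> bool,
  exists c, [/\ derivable c, ~~ sat v c & atoms c \subset U].

Let refuted_within_setT : refuted_within setT.
Proof.
move=> v; have [c [w [Cc aw nsat]]] := C_unsat v.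
by exists c; split; rewrite ?subsetT //; exists w => //; apply: rd_base.
Qed.

Let refuted_within_delete U y : refuted_within U -> refuted_within (U :\ y).
Proof.
move=> HU v; have [c0 [D0 F0 A0]] := HU (upd v y false).
have [c1 [D1 F1 A1]] := HU (upd v y true).
have [y0 | ny0] := boolP (y \in atoms c0); last first.
  by exists c0; split; rewrite ?subsetD1 ?A0 //; apply: unsat_upd_notin F0.
have [y1 | ny1] := boolP (y \in atoms c1); last first.
  by exists c1; split; rewrite ?subsetD1 ?A1 //; apply: unsat_upd_notin F1.
have /satPn[_ /(_ y) F02] := F0.
have /satPn[/(_ y) F11 _] := F1.
rewrite /upd eqxx in F02 F11.
have nc02 : y \notin c0.2 by apply/negP => /F02.
have nc11 : y \notin c1.1 by apply/negP => /F11.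
exists (resolve y c0 c1); split; [| exact: unsat_resolve_upd |].
- rewrite /derivable; have [w0 aw0 Dw0] := D0; have [w1 aw1 Dw1] := D1.
  exists (Order.meet w0 w1) => /=; first by rewrite lexI aw0 aw1.
  apply: (rd_res Dw0 Dw1); exists y; left.
  by move: y0 y1; rewrite !inE (negbTE nc02) (negbTE nc11) orbF.
- rewrite subsetD1 /atoms /= !inE !eqxx (negbTE nc02) (negbTE nc11) andbT.
  apply: subset_trans (_ : _ \subset atoms c0 :|: atoms c1) _; last first.
    by rewrite subUset A0 A1.
  apply/subsetP=> z; rewrite !inE.
  by case/orP=> [/orP[/andP[_ ->] | ->] | /orP[-> | /andP[_ ->]]]; rewrite ?orbT.
Qed.

Lemma res_deriv_complete : exists2 w, a <= w & res_deriv C (empty_clause T) w.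
Proof.
have within_all (s : seq T) : refuted_within (setT :\: [set z in s]).
  elim: s => [|y s IH]; first by rewrite (_ : [set z in [::]] = set0) ?setD0;
    [ | apply/setP=> z; rewrite !inE].
  rewrite (_ : _ :\: _ = (setT :\: [set z in s]) :\ y).
    exact: refuted_within_delete.
  by apply/setP=> z; rewrite !inE negb_or -andbA.
have [[c1 c2] [[w aw Dw] _]] := within_all (enum T) xpredT.
have -> : setT :\: [set z in enum T] = set0.
  by apply/setP=> z; rewrite !inE mem_enum.
rewrite subset0 setU_eq0 => /andP[/eqP/= c1_0 /eqP/= c2_0].
by rewrite c1_0 c2_0 in Dw; exists w.
Qed.

End Resolution.

Section PossibilisticLogic.
Context {d : Order.disp_t} (Q : finTBLatticeType d) (T : finType).
Variable B : form T -> Q -> Prop.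

Lemma pl_deriv_sound (v : T -> bool) f a :
  pl_deriv B f a -> (forall g b, B g b -> a <= b -> feval v g) -> feval v f.
Proof.
elim=> {f a} [f a Bf | f taut_f | f g a b _ IHf _ IHfg | f a b e _ IH _ _ le_e]
  Hv.
- exact: Hv Bf _.
- exact: taut_f.
- have /implyP := IHfg (fun g' b' Bg' le_b' =>
    Hv g' b' Bg' (le_trans (leIr _ _) le_b')).
  apply; apply: IHf => g' b' Bg' le_b'.
  exact: Hv Bg' (le_trans (leIl _ _) le_b').
- apply: IH => g' b' Bg' le_b'; apply: Hv Bg' _.
  by apply: le_trans le_e (le_trans (leIl _ _) le_b').
Qed.

Lemma pl_deriv_weaken f a e : pl_deriv B f a -> e <= a -> pl_deriv B f e.
Proof. by move=> Df le_e; apply: (pl_weak Df Df); rewrite meetxx. Qed.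

Lemma feval_foldr_FImp (v : T -> bool) (L : seq (form T)) g :
  ((forall f, List.In f L -> feval v f) -> feval v g) ->
  feval v (foldr (@FImp T) g L).
Proof.
elim: L => [|f L IH] /= Hv; first exact: Hv.
by apply/implyP=> vf; apply: IH => HL; apply: Hv => f' [<- | /HL].
Qed.

Lemma pl_deriv_foldr_FImp (L : seq (form T)) g a b :
  (forall f, List.In f L -> pl_deriv B f a) ->
  pl_deriv B (foldr (@FImp T) g L) b -> a <= b -> pl_deriv B g a.
Proof.
elim: L b => [|f L IH] b /= DL Dg le_ab; first exact: pl_deriv_weaken Dg le_ab.
have := pl_mp (DL f (or_introl erefl)) Dg; rewrite (meet_l le_ab) => Dg'.
by apply: IH Dg' (lexx a) => f' Lf'; apply: DL; right.
Qed.

Lemma pl_deriv_entailed (L : seq (form T)) g a :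
  (forall f, List.In f L -> pl_deriv B f a) ->
  (forall v, (forall f, List.In f L -> feval v f) -> feval v g) ->
  pl_deriv B g a.
Proof.
move=> DL HL; apply: pl_deriv_foldr_FImp DL (pl_ax _ _) (lex1 a).
by move=> v; apply: feval_foldr_FImp; apply: HL.
Qed.

End PossibilisticLogic.

Section Program.
Context {d : Order.disp_t} (Q : finTBLatticeType d) (T : finType).
Variables (N : seq (pclause T Q)) (S : {set T}).

Definition models_cut (a : Q) (v : T -> bool) : Prop :=
  forall h p w, in_reduct N S h p w -> a <= w -> sat v (h, p).

Definition cut_entails (a : Q) (x : T) : Prop :=
  forall v, models_cut a v -> v x.

Definition max_cut_entails (a : Q) (x : T) : Prop :=
  cut_entails a x /\ forall b, cut_entails b x -> a <= b -> b = a.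

Lemma cut_entails_le a b x : a <= b -> cut_entails b x -> cut_entails a x.
Proof.
move=> le_ab Hb v Hv; apply: Hb => h p w Hr le_bw.
exact: Hv Hr (le_trans le_ab le_bw).
Qed.

Definition cut_clause (a : Q) (r : pclause T Q) : bool :=
  [&& phead r :&: S != set0, pneg r :&: S == set0, ppos r \subset S
    & a <= pweight r].

Let reduct_formula (r : pclause T Q) := clause_formula (phead r :&: S) (ppos r).

Lemma pl_derivE a x :
  pl_deriv (reduct_base N S) (FVar x) a <-> cut_entails a x.
Proof.
split=> [Dx v Hv | Hx].
  apply: (pl_deriv_sound Dx) => _ b [h [p [Hr ->]]] le_ab.
  by rewrite feval_clause_formula; apply: Hv Hr le_ab.
pose L := List.map reduct_formula (List.filter (cut_clause a) N).
apply: (@pl_deriv_entailed _ _ _ _ L) => [f | v HL].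
  case/List.in_map_iff=> r [<- /List.filter_In[Nr /and4P[Sh /eqP Sn Sp le_ar]]].
  apply: pl_deriv_weaken le_ar; apply: pl_hyp.
  by exists (phead r :&: S), (ppos r); split=> //; exists r.
apply: Hx => h p w [r [Nr Sh Sn Sp [-> -> ->]]] le_aw.
rewrite -feval_clause_formula; apply: HL; apply/List.in_map_iff; exists r.
by split=> //; apply/List.filter_In; rewrite /cut_clause Sh Sn Sp le_aw eqxx.
Qed.

Lemma refutes_sound x w : refutes N S x w -> cut_entails w x.
Proof.
move=> Dx v Hv; apply: contraT => nvx.
have <- : sat v (empty_clause T) = false.
  by apply/negbTE/satPn; split=> z; rewrite inE.
apply: (res_deriv_sound Dx) => c w' [[h [p [Hr ->]]] | [-> ->]] le_ww'.
  exact: Hv Hr le_ww'.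
by rewrite /sat /=; apply/orP; right; apply/exists_inP; exists x; rewrite ?inE.
Qed.

Lemma refutesE a x :
  (exists2 w, a <= w & refutes N S x w) <-> cut_entails a x.
Proof.
split=> [[w le_aw /refutes_sound]|Hx]; first exact: cut_entails_le.
apply: res_deriv_complete => v.
have [vx | nvx] := boolP (v x).
  exists (set0, [set x]), \top; split; [by right | exact: lex1 |].
  by apply/satPn; split=> z; rewrite inE // => /eqP ->.
apply: NNPP => Hno; move/negP: nvx; apply; apply: Hx => h p w Hr le_aw.
apply: contraT => nsat; case: Hno.
by exists (h, p), w; split=> //; left; exists h, p.
Qed.

Lemma max_refutesE a x :
  (refutes N S x a /\ forall b, refutes N S x b -> a <= b -> b = a)
  <-> max_cut_entails a x.
Proof.
split=> [[Ra Hmax] | [Ha Hmax]].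
  split=> [|b Hb le_ab]; first exact: refutes_sound.
  have [w le_bw Rw] := (refutesE b x).2 Hb.
  have Ewa := Hmax w Rw (le_trans le_ab le_bw).
  by apply: le_anti; rewrite le_ab -Ewa le_bw.
have [w le_aw Rw] := (refutesE a x).2 Ha.
have Ewa := Hmax w (refutes_sound Rw) le_aw; rewrite Ewa in Rw.
by split=> // b Rb le_ab; apply: Hmax (refutes_sound Rb) le_ab.
Qed.

End Program.

Section AnswerSets.
Context {d : Order.disp_t} (Q : finTBLatticeType d) (T : finType).
Variable N : seq (pclause T Q).

Lemma answer_set_subset_eq S1 S2 :
  answer_set N S1 -> answer_set N S2 -> S1 \subset S2 -> S1 = S2.
Proof.
move=> [model1 _] [_ min2] sub12; apply/eqP; rewrite eqEproper sub12 /=.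
apply/negP => /min2; apply => r Nr neg2 pos1; apply: model1 pos1 => //.
by apply/eqP; rewrite -subset0 -neg2 setIS.
Qed.

Definition degrees_maximal (M : pset Q T) : Prop :=
  forall x a, M x = Some a -> max_cut_entails N (pstar M) a x.

Lemma procedure_outputE M :
  procedure_output N M <-> answer_set N (pstar M) /\ degrees_maximal M.
Proof.
split=> [[S [HS HM]] | [HA Hdeg]].
  have EMS : pstar M = S.
    apply/setP=> z; rewrite inE; have [zS | nzS] := boolP (z \in S).
      by have [_ /(_ zS) [a [-> _ _]]] := HM z.
    by have [/(_ nzS) -> _] := HM z.
  split=> [|x a Mx]; rewrite EMS //.
  have xS : x \in S by rewrite -EMS inE Mx.
  have [_ /(_ xS) [a' [Mx' Ra' max_a']]] := HM x.
  by move: Mx'; rewrite Mx => -[->]; apply/max_refutesE.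
exists (pstar M); split=> // x; split; first by rewrite inE negbK => /eqP.
rewrite inE; case Mx: (M x) => [a|] // _; exists a.
by have [Ra max_a] := (max_refutesE _ _ _ _).2 (Hdeg x a Mx); split.
Qed.

Lemma poss_answer_setE M :
  poss_answer_set N M <-> answer_set N (pstar M) /\ degrees_maximal M.
Proof.
split=> [[HA [_ HP] Hmax] | [HA Hdeg]].
  split=> // x a Mx; split=> [|b Hb le_ab]; first exact/pl_derivE/HP.
  apply: NNPP => nba; apply: Hmax.
  pose M' : pset Q T := [ffun u => if u == x then Some b else M u].
  have EM' : pstar M' = pstar M.
    by apply/setP=> u; rewrite !inE ffunE; case: (u =P x) => // ->; rewrite Mx.
  exists M'; split.
  - by move/(congr1 (fun f : pset Q T => f x)); rewrite ffunE eqxx Mx => -[].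
  - split=> [|u g e]; first by rewrite EM'.
    rewrite ffunE; case: (u =P x) => [-> | _]; first by rewrite Mx => -[<-] [<-].
    by move=> -> [->].
  - split=> [|u e]; rewrite EM' // ffunE.
    by case: (u =P x) => [-> [<-] | _ /HP]; first apply/pl_derivE.
have HP : pl_entails N M.
  by split=> // x a /Hdeg[Hx _]; apply/pl_derivE.
split=> // -[M' [neq [sub le] [HA' HP']]]; apply: neq; apply/ffunP=> z.
have E := answer_set_subset_eq HA HA' sub.
case Mz: (M z) => [a|]; last first.
  have : z \notin pstar M' by rewrite -E inE Mz.
  by rewrite inE negbK => /eqP.
have : z \in pstar M' by rewrite -E inE Mz.
rewrite inE; case M'z: (M' z) => [e|] // _.
have Ce : cut_entails N (pstar M) e z by rewrite E; apply/pl_derivE/HP'.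
by rewrite ((Hdeg z a Mz).2 e Ce (le z a e Mz M'z)).
Qed.

End AnswerSets.

Theorem proposition8 (d : Order.disp_t) (Q : finTBLatticeType d) (T : finType)
  (N : seq (pclause T Q)) :
  wf_program N ->
  forall M : pset Q T, procedure_output N M <-> poss_answer_set N M.
Proof.
(* Constraints never enter a reduct (their head misses S): their weight is
   irrelevant. *)
move=> _ M.
exact: iff_trans (procedure_outputE N M) (iff_sym (poss_answer_setE N M)).
Qed.
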